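(* Let $(\mathcal{M},g,\nabla,\nabla^* )$ be a dually flat manifold with $\nabla$-affine coordinates $\theta$, $\nabla^*$-affine coordinates $\eta$ and potentials $\psi,\varphi$. Let $\mathcal{S}\subset\mathcal{M}$ be an $m$-dimensional $\nabla$-auto-parallel submanifold, endowed with the induced dually flat structure, and let $(u_a)_{1\le a\le m}$ be $\nabla$-affine coordinates on $\mathcal{S}$. Fix $q\in\mathcal{M}\setminus\mathcal{S}$ and consider the $\nabla^*$-projection problem $\min_{p\in\mathcal{S}} D(p\|q)$, i.e. minimization of $f(u)=\psi(\theta(u))+\varphi(\eta^q)-\sum_{i=1}^n\theta_i(u)\eta^q_i$. Then, in the coordinates $u$, each iteration of the coordinate-based dual Riemannian Newton method applied to $f$ on $\mathcal{S}$ coincides with the iteration of the coordinate-based natural gradient method (with step size $s=1$); that is, both methods produce the update $u\gets u-\mathbf{G}(u)^{-1}\boldsymbol{\nabla}f(u)$.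
   Context: Dually flat manifold: a Riemannian manifold $(\mathcal{M},g)$ with torsion-free affine connections $\nabla,\nabla^*$ that are dual w.r.t. $g$ ($X\langle Y,Z\rangle=\langle\nabla_XY,Z\rangle+\langle Y,\nabla^*_XZ\rangle$) and whose curvature tensors both vanish. Coordinates are $\nabla$-affine if the Christoffel symbols of $\nabla$ vanish in them. On such a manifold there exist $\nabla$-affine coordinates $\theta$, $\nabla^*$-affine coordinates $\eta$ and smooth strictly convex potentials $\psi(\theta)$, $\varphi(\eta)$ with $\eta_i=\partial\psi/\partial\theta_i$, $\theta_i=\partial\varphi/\partial\eta_i$, $g_{ij}(\theta)=\partial^2\psi/\partial\theta_i\partial\theta_j$, $\psi(\theta)+\varphi(\eta)=\sum_i\theta_i\eta_i$. The $\nabla$-divergence is $D(p\|q)=\psi(\theta^p)+\varphi(\eta^q)-\sum_i\theta^p_i\eta^q_i$. A submanifold $\mathcal{S}$ is $\nabla$-auto-parallel if $\nabla_XY$ is tangent to $\mathcal{S}$ for all vector fields $X,Y$ tangent to $\mathcal{S}$; equivalently there are a constant rank-$m$ matrix $\mathbf{A}\in\mathbb{R}^{n\times m}$, a constant $\mathbf{b}\in\mathbb{R}^n$ and $\nabla$-affine coordinates $u$ on $\mathcal{S}$ with $\theta=\mathbf{A}u+\mathbf{b}$; with the induced metric, the restricted connection $\nabla$ and its dual, $\mathcal{S}$ is itself dually flat. For a manifold with dual connections $(\nabla,\nabla^* )$, a chart $\xi$, metric matrix $\mathbf{G}(\xi)$, coordinate gradient $\boldsymbol{\nabla}f(\xi)$,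 $a=\mathbf{G}^{-1}\boldsymbol{\nabla}f$, Christoffel symbols $\Gamma^k_{ij}$ of $\nabla$ and $\Gamma^{*}_{ij}{}^k$ of $\nabla^*$ (defined by $\nabla_{\partial_i}\partial_j=\sum_k\Gamma^k_{ij}\partial_k$, etc.), and $\mathbf{H}^*_{ij}=\partial a_j/\partial\xi_i+\sum_k a_k\Gamma^{*}_{ik}{}^j$: the coordinate-based dual Riemannian Newton method iterates: solve $\mathbf{H}^{*\top}(\xi)\boldsymbol{\beta}=-\mathbf{G}^{-1}(\xi)\boldsymbol{\nabla}f(\xi)$, then set $\xi_i\gets\xi_i+\beta_i-\tfrac12\sum_{j,k}\Gamma^i_{jk}(\xi)\beta_j\beta_k$. The coordinate-based natural gradient method with step size $s>0$ iterates $\xi\gets\xi-s\,\mathbf{G}^{-1}(\xi)\boldsymbol{\nabla}f(\xi)$. *)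

From HB Require Import structures.
From mathcomp Require Import all_boot all_order all_algebra.
From mathcomp Require Import all_classical all_reals all_analysis.
Set Implicit Arguments. Unset Strict Implicit. Unset Printing Implicit Defensive.
Import Order.TTheory GRing.Theory Num.Theory.
Import numFieldNormedType.Exports.
Local Open Scope classical_set_scope.
Local Open Scope ring_scope.

(* Coordinate points are row vectors 'rV[R]_k; e_i := delta_mx 0 i. *)

Definition partial {R : realType} {k : nat} (f : 'rV[R]_k -> R) (i : 'I_k)
  (x : 'rV[R]_k) : R := derive f x (delta_mx 0 i).

Fixpoint iter_partial {R : realType} {k : nat} (f : 'rV[R]_k -> R)
  (s : seq 'I_k) : 'rV[R]_k -> R :=
  match s with
  | [::] => f
  | i :: s' => partial (iter_partial f s') i
  end.

Definition smooth_at {R : realType} {k : nat} (f : 'rV[R]_k -> R)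
  (x : 'rV[R]_k) : Prop :=
  forall s : seq 'I_k, differentiable (iter_partial f s) x.

Definition grad {R : realType} {k : nat} (f : 'rV[R]_k -> R) (x : 'rV[R]_k)
  : 'cV[R]_k := \col_i partial f i x.

Definition hess {R : realType} {k : nat} (f : 'rV[R]_k -> R) (x : 'rV[R]_k)
  : 'M[R]_k := \matrix_(i, j) partial (partial f j) i x.

(* Gam xi i j k = Gamma^k_{ij} (Christoffel symbols of nabla).
   The Christoffel symbols of the dual connection nabla^* are determined by duality
   d_i <d_l, d_k> = <nabla_{d_i} d_l, d_k> + <d_l, nabla^*_{d_i} d_k>, i.e.
   Gamma^*_{ik}^j = sum_l G^{jl} (d_i G_{lk} - sum_p Gamma^p_{il} G_{pk}). *)
Definition dual_christoffel {R : realType} {k : nat}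
  (G : 'rV[R]_k -> 'M[R]_k) (Gam : 'rV[R]_k -> 'I_k -> 'I_k -> 'I_k -> R)
  (xi : 'rV[R]_k) (i kk j : 'I_k) : R :=
  \sum_l (invmx (G xi)) j l *
     (partial (fun y => G y l kk) i xi - \sum_p Gam xi i l p * G xi p kk).

Definition nat_dir {R : realType} {k : nat} (G : 'rV[R]_k -> 'M[R]_k)
  (f : 'rV[R]_k -> R) (xi : 'rV[R]_k) : 'cV[R]_k := invmx (G xi) *m grad f xi.

Definition Hstar {R : realType} {k : nat} (G : 'rV[R]_k -> 'M[R]_k)
  (Gam : 'rV[R]_k -> 'I_k -> 'I_k -> 'I_k -> R) (f : 'rV[R]_k -> R)
  (xi : 'rV[R]_k) : 'M[R]_k :=
  \matrix_(i, j) (partial (fun y => nat_dir G f y j 0) i xi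
                  + \sum_kk nat_dir G f xi kk 0 * dual_christoffel G Gam xi i kk j).

Definition dual_newton_system {R : realType} {k : nat} (G : 'rV[R]_k -> 'M[R]_k)
  (Gam : 'rV[R]_k -> 'I_k -> 'I_k -> 'I_k -> R) (f : 'rV[R]_k -> R)
  (xi : 'rV[R]_k) (beta : 'cV[R]_k) : Prop :=
  (Hstar G Gam f xi)^T *m beta = - nat_dir G f xi.

Definition dual_newton_update {R : realType} {k : nat}
  (Gam : 'rV[R]_k -> 'I_k -> 'I_k -> 'I_k -> R) (xi : 'rV[R]_k) (beta : 'cV[R]_k)
  : 'rV[R]_k :=
  \row_i (xi 0 i + beta i 0 - 2^-1 * \sum_j \sum_kk Gam xi j kk i * beta j 0 * beta kk 0).

Definition nat_grad_step {R : realType} {k : nat} (G : 'rV[R]_k -> 'M[R]_k)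
  (f : 'rV[R]_k -> R) (s : R) (xi : 'rV[R]_k) : 'rV[R]_k :=
  xi - s *: (nat_dir G f xi)^T.

Definition eta_of {R : realType} {n : nat} (psi : 'rV[R]_n -> R) (th : 'rV[R]_n)
  : 'rV[R]_n := \row_i partial psi i th.

(* nabla-auto-parallel submanifold theta = u A + b (row convention) *)
Definition theta_of {R : realType} {n m : nat} (A : 'M[R]_(m, n)) (b : 'rV[R]_n)
  (u : 'rV[R]_m) : 'rV[R]_n := u *m A + b.

Definition induced_metric {R : realType} {n m : nat} (psi : 'rV[R]_n -> R)
  (A : 'M[R]_(m, n)) (b : 'rV[R]_n) (u : 'rV[R]_m) : 'M[R]_m :=
  A *m hess psi (theta_of A b u) *m A^T.

(* u are nabla-affine on S: the Christoffel symbols of nabla vanish *)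
Definition zero_christoffel {R : realType} {m : nat} :
  'rV[R]_m -> 'I_m -> 'I_m -> 'I_m -> R := fun _ _ _ _ => 0.

Definition proj_objective {R : realType} {n m : nat} (psi phi : 'rV[R]_n -> R)
  (A : 'M[R]_(m, n)) (b : 'rV[R]_n) (thq : 'rV[R]_n) (u : 'rV[R]_m) : R :=
  psi (theta_of A b u) + phi (eta_of psi thq)
  - \sum_i theta_of A b u 0 i * eta_of psi thq 0 i.

From HB Require Import structures.
From mathcomp Require Import all_boot all_order all_algebra.
From mathcomp Require Import all_classical all_reals all_analysis.
From mathcomp Require Import lra.
Import Order.TTheory GRing.Theory Num.Theory.
Import numFieldNormedType.Exports.
Set Implicit Arguments.
Unset Strict Implicit.
Unset Printing Implicit Defensive.
Local Open Scope classical_set_scope.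
Local Open Scope ring_scope.

(** In the ∇-affine coordinates [u] of the auto-parallel submanifold the
    Christoffel symbols of ∇ vanish and the induced metric
    [G = A (∇²ψ) Aᵀ] is exactly the coordinate Hessian of [f].  Differentiating
    [a = G⁻¹ ∇f] then gives [∂ᵢ a = eᵢ - G⁻¹ (∂ᵢ G) a], and the dual
    Christoffel term [Σₖ aₖ Γ*ᵢₖʲ] is [(G⁻¹ (∂ᵢ G) a)ⱼ]: the two cancel, so
    [H* = 1].  Hence the dual Newton direction is [β = -a] and its
    second-order correction vanishes, which is a natural gradient step of
    size 1.  Symmetry of [G] is Schwarz's theorem for the smooth potential
    [ψ]; invertibility follows from positive definiteness of [∇²ψ] and
    [rank A = m]. *)

Section matrix_calculus.
Context {R : realFieldType} {V : normedModType R}.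

Lemma differentiable_sum_seq {W : normedModType R} (I : Type) (r : seq I)
    (P : pred I) (F : I -> V -> W) (x : V) :
  (forall i, P i -> differentiable (F i) x) ->
  differentiable (fun y => \sum_(i <- r | P i) F i y) x.
Proof.
move=> dF; rewrite -fct_sumE.
elim/big_ind: _ => [|f h |i /dF //]; first exact: differentiable_cst.
exact: differentiableD.
Qed.

Lemma differentiable_prod_seq (I : Type) (r : seq I) (F : I -> V -> R) (x : V) :
  (forall i, differentiable (F i) x) ->
  differentiable (fun y => \prod_(i <- r) F i y) x.
Proof.
move=> dF; rewrite -fct_prodE.
elim/big_ind: _ => [|f h |i _]; [exact: differentiable_cst | | exact: dF].
exact: differentiableM.
Qed.

Lemma differentiable_mxP m n (M : V -> 'M[R]_(m, n)) (x : V) :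
  differentiable M x <-> forall i j, differentiable (fun y => M y i j) x.
Proof.
split=> [dM i j | dM].
  exact: (differentiable_comp dM (differentiable_coord _ i j)).
rewrite [M](_ : _ = fun y => \sum_i \sum_j M y i j *: delta_mx i j); last first.
  by apply/funext => y; rewrite [LHS]matrix_sum_delta.
apply: differentiable_sum_seq => i _; apply: differentiable_sum_seq => j _.
exact: differentiableZl.
Qed.

Lemma differentiable_mulmx m n p (P : V -> 'M[R]_(m, n)) (Q : V -> 'M[R]_(n, p))
    (x : V) :
  differentiable P x -> differentiable Q x ->
  differentiable (fun y => P y *m Q y) x.
Proof.
move=> /differentiable_mxP dP /differentiable_mxP dQ.
apply/differentiable_mxP => i j.
under eq_fun do rewrite mxE.
apply: differentiable_sum_seq => k _; exact: differentiableM.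
Qed.

Lemma derivable_mulmx m n p (P : V -> 'M[R]_(m, n)) (Q : V -> 'M[R]_(n, p))
    (x v : V) :
  derivable P x v -> derivable Q x v -> derivable (fun y => P y *m Q y) x v.
Proof.
move=> /derivable_mxP dP /derivable_mxP dQ; apply/derivable_mxP => i j.
have -> : (fun y => (P y *m Q y) i j) = \sum_k (fun y => P y i k * Q y k j).
  by apply/funext => y; rewrite mxE fct_sumE.
by apply: derivable_sum => k; exact: derivableM.
Qed.

Lemma derive_mulmx m n p (P : V -> 'M[R]_(m, n)) (Q : V -> 'M[R]_(n, p))
    (x v : V) :
  derivable P x v -> derivable Q x v ->
  'D_v (fun y => P y *m Q y) x = 'D_v P x *m Q x + P x *m 'D_v Q x.
Proof.
move=> dP dQ; rewrite !derive_mx //; last exact: derivable_mulmx.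
move/derivable_mxP: dP => dP; move/derivable_mxP: dQ => dQ.
apply/matrixP => i j; rewrite !mxE.
have -> : (fun y => (P y *m Q y) i j) = \sum_k (fun y => P y i k * Q y k j).
  by apply/funext => y; rewrite mxE fct_sumE.
rewrite derive_sum => [|k]; last exact: derivableM.
rewrite -big_split; apply: eq_bigr => k _.
by rewrite deriveM // !mxE addrC [_ *: _]mulrC.
Qed.

Lemma differentiable_det n (M : V -> 'M[R]_n) (x : V) :
  differentiable M x -> differentiable (fun y => \det (M y)) x.
Proof.
move=> /differentiable_mxP dM; apply: differentiable_sum_seq => s _.
apply: differentiableM; first exact: differentiable_cst.
exact: differentiable_prod_seq.
Qed.

Lemma differentiable_adj n (M : V -> 'M[R]_n) (x : V) :
  differentiable M x -> differentiable (fun y => \adj (M y)) x.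
Proof.
move=> dM; apply/differentiable_mxP => i j.
under eq_fun do rewrite mxE.
apply: differentiableM; first exact: differentiable_cst.
apply: differentiable_det; apply/differentiable_mxP => k l.
under eq_fun do rewrite !mxE.
by move/differentiable_mxP: dM; apply.
Qed.

Section invmx.
Variables (n : nat) (M : V -> 'M[R]_n) (x : V).
Hypotheses (dM : differentiable M x) (Mx_unit : M x \in unitmx).

Lemma near_unitmx : \forall y \near x, M y \in unitmx.
Proof.
have /cvgr_neq0 := differentiable_continuous (differentiable_det dM).
rewrite -unitfE -unitmxE => /(_ Mx_unit).
by apply: filterS => y; rewrite unitmxE unitfE.
Qed.

Lemma derivable_invmx (v : V) : derivable (fun y => invmx (M y)) x v.
Proof.
apply: (@near_eq_derivable _ _ _ (fun y => (\det (M y))^-1 *: \adj (M y))).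
  by apply: filterS near_unitmx => y My_unit; rewrite /invmx My_unit.
apply/diff_derivable/differentiable_mxP => i j; under eq_fun do rewrite mxE.
apply: differentiableM.
  by apply: differentiableV (differentiable_det dM) _; rewrite -unitfE.
by move/differentiable_mxP: (differentiable_adj dM).
Qed.

Lemma derive_invmx (v : V) :
  'D_v (fun y => invmx (M y)) x = - (invmx (M x) *m 'D_v M x *m invmx (M x)).
Proof.
have dMv : derivable M x v by exact: diff_derivable.
have : 'D_v (fun y => invmx (M y) *m M y) x = 'D_v (cst 1%:M) x.
  by apply: near_eq_derive; apply: filterS near_unitmx => y; apply: mulVmx.
rewrite derive_cst (derive_mulmx (derivable_invmx (v := v)) dMv).
move/eqP; rewrite addr_eq0 => /eqP DinvM.
by rewrite -[LHS](mulmxK Mx_unit) DinvM mulNmx.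
Qed.

End invmx.

End matrix_calculus.

Section affine_precomposition.
Context {R : numFieldType} {U V W : normedModType R}.
Variables (L : U -> V) (c : V) (g : V -> W).
Hypothesis linL : linear L.

Let difference_quotient_comp (y v : U) :
  (fun h : R => h^-1 *: (((fun x => g (L x + c)) \o shift y) (h *: v)
                          - g (L y + c))) =
  (fun h : R => h^-1 *: ((g \o shift (L y + c)) (h *: L v) - g (L y + c))).
Proof. by apply/funext => h /=; rewrite linL addrA. Qed.

Lemma derivable_comp_affine (y v : U) :
  derivable (fun x => g (L x + c)) y v = derivable g (L y + c) (L v).
Proof. by rewrite /derivable difference_quotient_comp. Qed.

Lemma derive_comp_affine (y v : U) :
  'D_v (fun x => g (L x + c)) y = 'D_(L v) g (L y + c).
Proof. by rewrite /derive difference_quotient_comp. Qed.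

End affine_precomposition.

Section schwarz.
Context {R : realType} {V : normedModType R}.
Implicit Types (g : V -> R) (z a b : V).

Lemma mvt_line g z w (t : R) : 0 < t ->
    (forall s, 0 <= s <= t -> differentiable g (s *: w + z)) ->
  exists2 c, 0 < c < t & g (t *: w + z) - g z = t * 'D_w g (c *: w + z).
Proof.
move=> t_gt0 dg.
have linw : linear (fun s : R => s *: w).
  by move=> k r s; rewrite scalerDl scalerA.
pose f s := g (s *: w + z).
have Df s : 'D_1 f s = 'D_w g (s *: w + z).
  by rewrite /f derive_comp_affine ?scale1r.
have df s : 0 <= s <= t -> derivable f s 1.
  move=> s_in; rewrite /f derivable_comp_affine ?scale1r //.
  exact/diff_derivable/dg.
have [c c_in fE] : exists2 c, c \in `]0, t[ &
    f t - f 0 = 'D_w g (c *: w + z) * (t - 0).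
  apply: MVT => //.
    move=> s; rewrite in_itv /= => /andP[s_gt0 s_lt]; rewrite -Df.
    by apply/derivableP/df; rewrite !ltW.
  apply: continuous_in_subspaceT => s; rewrite inE /= in_itv /= => s_in.
  exact/differentiable_continuous/derivable1_diffP/df.
exists c; first by move: c_in; rewrite in_itv.
by move: fE; rewrite /f scale0r add0r subr0 mulrC.
Qed.

Lemma second_difference_mvt g z a b (t : R) : 0 < t ->
    (forall s r, 0 <= s <= t -> 0 <= r <= t ->
       differentiable g (s *: a + r *: b + z) /\
       differentiable ('D_a g) (s *: a + r *: b + z)) ->
  exists s r, [/\ 0 < s < t, 0 < r < t &
    g (t *: a + t *: b + z) - g (t *: a + z) - g (t *: b + z) + g z
      = t * t * 'D_b ('D_a g) (s *: a + r *: b + z)].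
Proof.
move=> t_gt0 dg.
have t_in : 0 <= t <= t by apply/andP; split => //; exact: ltW.
have O_in : (0 : R) <= 0 <= t by rewrite lexx ltW.
have dg_a s : 0 <= s <= t -> differentiable g (s *: a + z).
  by move=> s_in; have [] := dg s 0 s_in O_in; rewrite scale0r addr0.
have dg_ab s : 0 <= s <= t -> differentiable g (s *: a + z + t *: b).
  by move=> s_in; have [] := dg s t s_in t_in; rewrite addrAC.
have dg_shift s : 0 <= s <= t ->
    differentiable (fun y => g (y + t *: b)) (s *: a + z).
  move=> s_in; apply: differentiable_comp; last exact: dg_ab.
  by apply: differentiableD => //; exact: differentiable_cst.
pose alpha := (fun y => g (y + t *: b)) - g.
have [c c_in alphaE] := mvt_line t_gt0
  (fun s s_in => differentiableB (dg_shift s s_in) (dg_a s s_in)).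
have c_in' : 0 <= c <= t by case/andP: c_in => *; rewrite !ltW.
have dDg r : 0 <= r <= t -> differentiable ('D_a g) (r *: b + (c *: a + z)).
  by move=> r_in; have [] := dg c r c_in' r_in; rewrite addrCA addrA.
have [r r_in DgE] := mvt_line t_gt0 dDg.
exists c, r; split; [exact: c_in | exact: r_in |].
move: alphaE; rewrite /alpha deriveB; last first.
- exact/diff_derivable/dg_a.
- exact/diff_derivable/dg_shift.
have lin_id : linear (@id V) by [].
rewrite (derive_comp_affine (t *: b) g lin_id) => alphaE.
rewrite [r *: b + _]addrCA addrA [t *: b + _]addrC in DgE.
rewrite -mulrA -DgE -alphaE /= [t *: a + z + t *: b]addrAC [z + t *: b]addrC.
lra.
Qed.

Lemma near_box (P : V -> Prop) z a b : (\forall y \near z, P y) ->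
  exists2 t : R, 0 < t &
    forall s r, 0 <= s <= t -> 0 <= r <= t -> P (s *: a + r *: b + z).
Proof.
move=> /nbhs_ballP [d /= d_gt0 ballP].
pose K := 2 * (`|a| + `|b| + 1).
have K_gt0 : 0 < K by rewrite /K; have := normr_ge0 a; have := normr_ge0 b; lra.
exists (d / K); first exact: divr_gt0.
move=> s r /andP[s_ge0 s_le] /andP[r_ge0 r_le]; apply: ballP.
rewrite -ball_normE /= opprD addrCA subrr addr0 normrN.
apply: (le_lt_trans (ler_normD _ _)); rewrite !normrZ !ger0_norm //.
have sa := ler_wpM2r (normr_ge0 a) s_le.
have rb := ler_wpM2r (normr_ge0 b) r_le.
have dK : d / K * K = d by rewrite divfK // gt_eqF.
have := divr_gt0 d_gt0 K_gt0.
move: (d / K) dK sa rb => t; rewrite /K => dK sa rb t_gt0; lra.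
Qed.

Lemma schwarz g (Th : set V) z a b : open Th -> Th z ->
    (forall y, Th y -> [/\ differentiable g y, differentiable ('D_a g) y &
                          differentiable ('D_b g) y]) ->
    {for z, continuous ('D_b ('D_a g))} ->
    {for z, continuous ('D_a ('D_b g))} ->
  'D_b ('D_a g) z = 'D_a ('D_b g) z.
Proof.
move=> Th_open Th_z dg cont_ab cont_ba.
set c1 := 'D_b ('D_a g) z; set c2 := 'D_a ('D_b g) z.
apply/eqP; rewrite -subr_eq0 -normr_le0 leNgt; apply/negP => c12_gt0.
pose e := `|c1 - c2| / 4.
have e_gt0 : 0 < e by rewrite divr_gt0.
have near_z : \forall y \near z, [/\ Th y, `|c1 - 'D_b ('D_a g) y| < e
                                   & `|c2 - 'D_a ('D_b g) y| < e].
  have Th_near : \forall y \near z, Th y by apply: open_nbhs_nbhs.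
  have ab_near : \forall y \near z, `|c1 - 'D_b ('D_a g) y| < e.
    exact: (@cvgr_dist_lt _ _ _ _ (nbhs_filter z) _ _ cont_ab _ e_gt0).
  have ba_near : \forall y \near z, `|c2 - 'D_a ('D_b g) y| < e.
    exact: (@cvgr_dist_lt _ _ _ _ (nbhs_filter z) _ _ cont_ba _ e_gt0).
  by apply: filterS (filterI Th_near (filterI ab_near ba_near)) => y [? []].
have [t t_gt0 box] := near_box a b near_z.
have weaken x : 0 < x < t -> 0 <= x <= t by case/andP => *; rewrite !ltW.
(* The second difference over the box of side [t], expanded first along [a]
   and first along [b]. *)
have [|s1 [r1 [s1_in r1_in E1]]] :=
    second_difference_mvt t_gt0 (g := g) (z := z) (a := a) (b := b).
  by move=> s r s_in r_in; have [/dg[? ? _] _ _] := box s r s_in r_in.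
have [|s2 [r2 [s2_in r2_in E2]]] :=
    second_difference_mvt t_gt0 (g := g) (z := z) (a := b) (b := a).
  move=> s r s_in r_in; have [+ _ _] := box r s r_in s_in.
  by rewrite [r *: a + _]addrC => /dg[? _ ?].
have [_ near1 _] := box s1 r1 (weaken _ s1_in) (weaken _ r1_in).
have [_ _ near2] := box r2 s2 (weaken _ r2_in) (weaken _ s2_in).
rewrite (addrC (r2 *: a) (s2 *: b)) in near2.
have same_point : 'D_b ('D_a g) (s1 *: a + r1 *: b + z) =
                  'D_a ('D_b g) (s2 *: b + r2 *: a + z).
  rewrite (addrC (t *: b) (t *: a)) in E2.
  have tt_neq0 : t * t != 0 by rewrite mulf_neq0 // gt_eqF.
  apply: (mulfI tt_neq0); apply: etrans (esym E1) (etrans _ E2).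
  by congr (_ + _); rewrite addrAC.
rewrite same_point in near1.
set Y := 'D_a ('D_b g) (s2 *: b + r2 *: a + z) in near1 near2.
have near2' : `|Y - c2| < e by rewrite distrC.
have := le_lt_trans (ler_distD Y c1 c2) (ltrD near1 near2').
rewrite /e; move: (`|c1 - c2|) c12_gt0 => d; clear; lra.
Qed.

End schwarz.

Section partials.
Context {R : realType} {n : nat}.
Implicit Types (g : 'rV[R]_n -> R) (z w : 'rV[R]_n).

Lemma deriveE_partial g z w : differentiable g z ->
  'D_w g z = \sum_p w 0 p * partial g p z.
Proof.
move=> dg; rewrite deriveE // {1}(row_sum_delta w) linear_sum.
by apply: eq_bigr => p _; rewrite linearZ /= /partial deriveE.
Qed.

Lemma hess_sym g (Th : set 'rV[R]_n) z : open Th ->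
  (forall y, Th y -> smooth_at g y) -> Th z -> (hess g z)^T = hess g z.
Proof.
move=> Th_open g_smooth Th_z; apply/matrixP => p q; rewrite !mxE.
rewrite /partial; apply: (schwarz (a := 'e_p) (b := 'e_q) Th_open Th_z).
- move=> y /g_smooth y_smooth.
  by split; [exact: (y_smooth [::]) | exact: (y_smooth [:: _]) ..].
- exact/differentiable_continuous/(g_smooth _ Th_z [:: _; _]).
- exact/differentiable_continuous/(g_smooth _ Th_z [:: _; _]).
Qed.

End partials.

Section dual_newton.
Context {R : realType} {m : nat}.
Variables (G : 'rV[R]_m -> 'M[R]_m) (f : 'rV[R]_m -> R) (u : 'rV[R]_m).

Section grad.
Variable i : 'I_m.
Hypothesis df : forall k, derivable (partial f k) u 'e_i.

Let grad_entry k j : (fun y => grad f y k j) = partial f k.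
Proof. by apply/funext => y; rewrite mxE. Qed.

Lemma derivable_grad : derivable (grad f) u 'e_i.
Proof. by apply/derivable_mxP => k j; rewrite grad_entry. Qed.

Lemma derive_grad : 'D_'e_i (grad f) u = (row i (hess f u))^T.
Proof.
rewrite derive_mx; last exact: derivable_grad.
by apply/matrixP => k j; rewrite mxE grad_entry !mxE.
Qed.

End grad.

Lemma Hstar_hessian_metric :
    differentiable G u -> G u \in unitmx -> (G u)^T = G u ->
    (forall i k, derivable (partial f k) u 'e_i) -> hess f u = G u ->
  Hstar G zero_christoffel f u = 1%:M.
Proof.
move=> dG Gu_unit G_sym df hess_f; apply/matrixP => i j.
have dGinv := derivable_invmx dG Gu_unit (v := 'e_i).
have dGe : derivable G u 'e_i by exact: diff_derivable.
have dnat_dir : derivable (nat_dir G f) u 'e_i.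
  exact: derivable_mulmx dGinv (derivable_grad (df i)).
have Dnat_dir : 'D_'e_i (nat_dir G f) u =
    delta_mx i 0 - invmx (G u) *m 'D_'e_i G u *m nat_dir G f u.
  rewrite (derive_mulmx dGinv (derivable_grad (df i))) derive_invmx //.
  rewrite derive_grad // hess_f tr_row G_sym colE mulmxA mulVmx // mul1mx.
  by rewrite addrC mulNmx -!mulmxA.
have Gamma_star k : dual_christoffel G zero_christoffel u i k j =
    (invmx (G u) *m 'D_'e_i G u) j k.
  rewrite /dual_christoffel mxE; apply: eq_bigr => l _.
  rewrite big1 => [|p _]; last exact: mul0r.
  by rewrite subr0 (derive_mx dGe) mxE.
rewrite !mxE.
have -> : partial (fun y => nat_dir G f y j 0) i u
         = ('D_'e_i (nat_dir G f) u) j 0.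
  by rewrite (derive_mx dnat_dir) mxE.
under eq_bigr do rewrite Gamma_star mulrC.
by rewrite Dnat_dir !mxE subrK eqxx andbT eq_sym.
Qed.

Lemma dual_newton_update_flat (beta : 'cV[R]_m) :
  dual_newton_update zero_christoffel u beta = u + beta^T.
Proof.
apply/rowP => k; rewrite !mxE big1 ?mulr0 ?subr0 // => j _.
by rewrite big1 // => l _; rewrite /zero_christoffel !mul0r.
Qed.

Lemma dual_newton_nat_grad_step (beta : 'cV[R]_m) :
    Hstar G zero_christoffel f u = 1%:M ->
    dual_newton_system G zero_christoffel f u beta ->
  dual_newton_update zero_christoffel u beta = nat_grad_step G f 1 u.
Proof.
rewrite /dual_newton_system => -> ; rewrite trmx1 mul1mx => ->.
by rewrite dual_newton_update_flat /nat_grad_step scale1r linearN.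
Qed.

End dual_newton.

Lemma row_free_posdef_unitmx {R : realFieldType} {n m : nat} (H : 'M[R]_n)
    (A : 'M[R]_(m, n)) :
  row_free A -> (forall v : 'rV[R]_n, v != 0 -> 0 < (v *m H *m v^T) 0 0) ->
  A *m H *m A^T \in unitmx.
Proof.
move=> A_free H_posdef; rewrite -row_free_unit; apply: inj_row_free => v vAHA0.
apply/eqP/negPn/negP => v_neq0.
have := H_posdef (v *m A); rewrite mulmx_free_eq0 // => /(_ v_neq0).
have -> : v *m A *m H *m (v *m A)^T = v *m (A *m H *m A^T) *m v^T.
  by rewrite trmx_mul !mulmxA.
by rewrite vAHA0 mul0mx mxE ltxx.
Qed.

Section affine_submanifold.
Context {R : realType} {n m : nat}.
Variables (A : 'M[R]_(m, n)) (b : 'rV[R]_n).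

Let linear_mulmxA : linear (fun y : 'rV[R]_m => y *m A).
Proof. by move=> k y1 y2; rewrite mulmxDl scalemxAl. Qed.

Lemma differentiable_theta_of (u : 'rV[R]_m) : differentiable (theta_of A b) u.
Proof.
apply: differentiableD; last exact: differentiable_cst.
exact: differentiable_mulmx (differentiable_cst _ _).
Qed.

Lemma partial_comp_theta_of (g : 'rV[R]_n -> R) (y : 'rV[R]_m) k :
    differentiable g (theta_of A b y) ->
  partial (fun x => g (theta_of A b x)) k y
    = \sum_p A k p * partial g p (theta_of A b y).
Proof.
move=> dg; rewrite /partial (derive_comp_affine b g linear_mulmxA).
rewrite deriveE_partial // -rowE; apply: eq_bigr => p _; by rewrite mxE.
Qed.

Lemma differentiable_pairing (c z : 'rV[R]_n) :
  differentiable (fun z : 'rV[R]_n => \sum_i z 0 i * c 0 i) z.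
Proof.
apply: differentiable_sum_seq => i _; apply: differentiableM.
  exact: differentiable_coord.
exact: differentiable_cst.
Qed.

Lemma partial_pairing (c z : 'rV[R]_n) p :
  partial (fun z : 'rV[R]_n => \sum_i z 0 i * c 0 i) p z = c 0 p.
Proof.
have pairingE :
    (fun z : 'rV[R]_n => \sum_i z 0 i * c 0 i) = fun z => (z *m c^T) 0 0.
  by apply/funext => y; rewrite mxE; apply: eq_bigr => i _; rewrite mxE.
have did := @derivable_id _ _ z 'e_p.
have dcst := derivable_cst c^T z 'e_p.
have dM : derivable (fun z : 'rV[R]_n => z *m c^T) z 'e_p.
  exact: (derivable_mulmx (P := id) did dcst).
have /matrixP/(_ 0 0) := derive_mx dM.
rewrite (derive_mulmx (P := id) did dcst).
rewrite derive_id derive_cst mulmx0 addr0 !mxE /partial pairingE => <-.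
rewrite (bigD1 p) //= big1 => [|q /negbTE qp]; last by rewrite !mxE qp andbF mul0r.
by rewrite !mxE !eqxx mul1r addr0.
Qed.

Lemma partial_proj_objective (psi phi : 'rV[R]_n -> R) (thq : 'rV[R]_n)
    (y : 'rV[R]_m) k :
  differentiable psi (theta_of A b y) ->
  partial (proj_objective psi phi A b thq) k y
    = \sum_p A k p * (partial psi p (theta_of A b y) - eta_of psi thq 0 p).
Proof.
move=> dpsi; set c := eta_of psi thq.
pose pairing := fun z : 'rV[R]_n => \sum_i z 0 i * c 0 i.
pose F := psi + cst (phi c) - pairing.
have dF : differentiable F (theta_of A b y).
  apply: differentiableB (differentiable_pairing _ _).
  exact: differentiableD dpsi (differentiable_cst _ _).
rewrite -[proj_objective _ _ _ _ _]/(fun x => F (theta_of A b x)).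
rewrite partial_comp_theta_of //; apply: eq_bigr => p _; congr (_ * _).
have dpsi_p := @diff_derivable _ _ _ _ _ 'e_p dpsi.
have dcst := derivable_cst (phi c) (theta_of A b y) 'e_p.
rewrite /partial /F deriveB; first last.
- exact/diff_derivable/differentiable_pairing.
- exact: derivableD dpsi_p dcst.
rewrite (deriveD dpsi_p dcst) derive_cst addr0; congr (_ - _).
exact: partial_pairing.
Qed.

Section projection_objective.
Variables (Theta : set 'rV[R]_n) (psi phi : 'rV[R]_n -> R) (thq : 'rV[R]_n).
Variable u : 'rV[R]_m.
Hypotheses (Theta_open : open Theta)
  (psi_smooth : forall th, Theta th -> smooth_at psi th)
  (Theta_u : Theta (theta_of A b u)).

Local Notation f := (proj_objective psi phi A b thq).
Local Notation G := (induced_metric psi A b).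

Lemma differentiable_induced_metric : differentiable G u.
Proof.
apply: differentiable_mulmx (differentiable_cst _ _).
apply: differentiable_mulmx (differentiable_cst _ _) _.
apply: differentiable_comp (differentiable_theta_of u) _.
apply/differentiable_mxP => p q; under eq_fun do rewrite mxE.
exact: (psi_smooth Theta_u [:: p; q]).
Qed.

Lemma induced_metric_sym : (G u)^T = G u.
Proof.
rewrite /induced_metric !trmx_mul trmxK mulmxA.
by rewrite (hess_sym Theta_open psi_smooth Theta_u).
Qed.

Let near_Theta : \forall y \near u, Theta (theta_of A b y).
Proof.
apply: (differentiable_continuous (differentiable_theta_of u)).
exact: open_nbhs_nbhs.
Qed.

Let dpsi p := partial psi p \o theta_of A b.

Let grad_formula k : 'rV[R]_m -> R :=
  \sum_p A k p \*: (dpsi p - cst (eta_of psi thq 0 p)).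

Let near_grad_formula k :
  \forall y \near u, grad_formula k y = partial f k y.
Proof.
apply: filterS near_Theta => y Theta_y.
rewrite partial_proj_objective; last exact: (psi_smooth Theta_y [::]).
by rewrite /grad_formula fct_sumE.
Qed.

Let differentiable_dpsi p : differentiable (dpsi p) u.
Proof.
apply: differentiable_comp; first exact: differentiable_theta_of.
exact: (psi_smooth Theta_u [:: p]).
Qed.

Let derivable_grad_formula_term i k p :
  derivable (A k p \*: (dpsi p - cst (eta_of psi thq 0 p))) u 'e_i.
Proof.
apply: derivableZ; apply: derivableB; last exact: derivable_cst.
exact/diff_derivable/differentiable_dpsi.
Qed.

Lemma derivable_partial_proj_objective i k : derivable (partial f k) u 'e_i.
Proof.
apply: (near_eq_derivable (near_grad_formula k)).
exact: derivable_sum (@derivable_grad_formula_term i k).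
Qed.

Lemma hess_proj_objective : hess f u = G u.
Proof.
apply/matrixP => i k; rewrite [LHS]mxE /partial.
rewrite -(near_eq_derive _ (near_grad_formula k)).
rewrite (derive_sum (@derivable_grad_formula_term i k)) /induced_metric mxE.
apply: eq_bigr => p _; rewrite !mxE mulrC.
have dh : derivable (dpsi p) u 'e_i by exact/diff_derivable/differentiable_dpsi.
rewrite (deriveZ _ (derivableB dh (derivable_cst _ _ _))).
rewrite (deriveB dh (derivable_cst _ _ _)) derive_cst subr0.
rewrite -[X in _ *: X]/(partial (fun x => partial psi p (theta_of A b x)) i u).
rewrite partial_comp_theta_of; last exact: (psi_smooth Theta_u [:: p]).
by congr (_ * _); apply: eq_bigr => q _; rewrite mxE.
Qed.

End projection_objective.

End affine_submanifold.

Theorem theorem2 (R : realType) (n m : nat)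
  (Theta : set 'rV[R]_n) (psi phi : 'rV[R]_n -> R)
  (A : 'M[R]_(m, n)) (b : 'rV[R]_n) (thq : 'rV[R]_n) (u : 'rV[R]_m) :
  open Theta ->
  (forall th, Theta th -> smooth_at psi th) ->
  (forall th, Theta th -> forall v : 'rV[R]_n, v != 0 ->
       0 < (v *m hess psi th *m v^T) 0 0) ->
  (forall th, Theta th ->
       psi th + phi (eta_of psi th) = \sum_i th 0 i * eta_of psi th 0 i) ->
  \rank A = m ->
  Theta thq ->
  (forall v : 'rV[R]_m, theta_of A b v != thq) ->
  Theta (theta_of A b u) ->
  forall beta : 'cV[R]_m,
    dual_newton_system (induced_metric psi A b) zero_christoffel
      (proj_objective psi phi A b thq) u beta ->
    dual_newton_update zero_christoffel u beta
    = nat_grad_step (induced_metric psi A b) (proj_objective psi phi A b thq) 1 u.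
Proof.
move=> Theta_open psi_smooth psi_posdef _ rankA _ _ Theta_u beta.
apply: dual_newton_nat_grad_step; apply: Hstar_hessian_metric.
- exact: differentiable_induced_metric psi_smooth Theta_u.
- apply: row_free_posdef_unitmx; last exact: psi_posdef.
  by rewrite /row_free rankA.
- exact: induced_metric_sym Theta_open psi_smooth Theta_u.
- exact (derivable_partial_proj_objective Theta_open psi_smooth Theta_u).
- exact: hess_proj_objective Theta_open psi_smooth Theta_u.
Qed.
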